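(* Let $P$ and $Q$ be tangent planes in $\mathbb{H}^4$, i.e. distinct planes that are disjoint in $\mathbb{H}^4$ and whose boundaries at infinity meet in exactly one point. Then $H_PH_Q$ is a parabolic isometry.
   Context: A plane is a $2$-dimensional totally geodesic subspace of $\mathbb{H}^4$. For a plane $P$, the half-turn $H_P$ is the composition of reflections in two orthogonal hyperplanes intersecting in $P$. *)

(* hyperboloid model of H^4 inside Minkowski space R^{1,4}. *)
From HB Require Import structures.
From mathcomp Require Import all_boot all_order all_algebra.
From mathcomp Require Import reals.
Set Implicit Arguments. Unset Strict Implicit. Unset Printing Implicit Defensive.
Import Order.TTheory GRing.Theory Num.Theory.
Local Open Scope ring_scope.

Section Hyperbolic.
Variable R : realType.

(* Points of R^{1,4} are row vectors of length 5; coordinate 0 is the time coordinate. *)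
Definition vec := 'rV[R]_5.

Definition lorJ : 'M[R]_5 :=
  \matrix_(i, j) (if i == j then (if i == ord0 then -1 else 1) else 0).

Definition mink (x y : vec) : R := (x *m lorJ *m y^T) ord0 ord0.

Definition H4 (x : vec) : Prop := mink x x = -1 /\ 0 < x ord0 ord0.

(* points of the boundary at infinity: future null vectors, up to positive scaling *)
Definition ideal (u : vec) : Prop := mink u u = 0 /\ 0 < u ord0 0.
Definition same_ideal (u v : vec) : Prop := exists2 c : R, 0 < c & v = c *: u.

(* A (totally geodesic) plane of H^4: H^4 intersected with a 3-dimensional
   linear subspace V (given as the row space of a matrix) meeting H^4. *)
Definition is_plane (V : 'M[R]_5) : Prop :=
  \rank V = 3%N /\ exists x, H4 x /\ (x <= V)%MS.

Definition on_plane (V : 'M[R]_5) (x : vec) : Prop := H4 x /\ (x <= V)%MS.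

Definition on_plane_boundary (V : 'M[R]_5) (u : vec) : Prop := ideal u /\ (u <= V)%MS.

(* Isometries act on row vectors on the right: x |-> x *m A. *)
Definition isometry (A : 'M[R]_5) : Prop :=
  (forall x y, mink (x *m A) (y *m A) = mink x y) /\
  (forall x, H4 x -> H4 (x *m A)).

(* Reflection in the hyperplane H^4 ∩ n^perp, n a unit spacelike normal:
   x |-> x - 2 <x,n> n *)
Definition refl (n : vec) : 'M[R]_5 := 1%:M - 2%:R *: (lorJ *m n^T *m n).

(* A is a half-turn about the plane V: the composition of the reflections in
   two orthogonal hyperplanes (normals n1, n2) whose intersection is V ∩ H^4. *)
Definition half_turn (V : 'M[R]_5) (A : 'M[R]_5) : Prop :=
  exists n1 n2 : vec,
    [/\ mink n1 n1 = 1, mink n2 n2 = 1, mink n1 n2 = 0,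
        (forall x, H4 x -> (on_plane V x <-> (mink x n1 = 0 /\ mink x n2 = 0)))
      & A = refl n2 *m refl n1].

Definition fixes_ideal (A : 'M[R]_5) (u : vec) : Prop := same_ideal u (u *m A).

Definition parabolic (A : 'M[R]_5) : Prop :=
  [/\ isometry A,
      (forall x, H4 x -> x *m A <> x),
      (exists u, ideal u /\ fixes_ideal A u)
    & (forall u v, ideal u -> ideal v -> fixes_ideal A u -> fixes_ideal A v ->
         same_ideal u v)].

End Hyperbolic.

(* Let n1, n2 and m1, m2 be the unit normals of the hyperplanes defining the
   half-turns about P and Q.  A common ideal point p of the planes is orthogonal
   to all four normals, so both half-turns fix it; disjointness of the planes says
   that no timelike vector is orthogonal to all four normals.  If H_P H_Q fixes a
   vector x, then H_Q x = H_P x, which forces the projection y of x onto the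
   orthogonal complement of n1, n2 to be orthogonal to m1, m2 as well; since
   <y,y> = <x,x> - <x,n1>^2 - <x,n2>^2, a point of H^4 cannot be fixed.  A fixed
   ideal point u either satisfies <u,p> = 0, and then is proportional to p, or is
   fixed outright, and then y + p is a timelike vector orthogonal to all four
   normals. *)
From Pilot Require Import Defs.
From HB Require Import structures.
Set Warnings "-notation-overridden,-ambiguous-paths".
From mathcomp Require Import all_boot all_order all_algebra reals.
From mathcomp Require Import ring lra.
Set Implicit Arguments. Unset Strict Implicit. Unset Printing Implicit Defensive.
Import Order.TTheory GRing.Theory Num.Theory.
Local Open Scope ring_scope.

Section Minkowski.
Variable R : realType.
Implicit Types (x y z u p n : vec R) (a k : R).

Notation time x := (x ord0 ord0).

Definition sdot x y : R := \sum_(j < 4) x ord0 (lift ord0 j) * y ord0 (lift ord0 j).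

Lemma mulmx_lorJ x j :
  (x *m lorJ R) ord0 j = (if j == ord0 then - x ord0 j else x ord0 j).
Proof.
rewrite mxE (bigD1 j) //= big1 => [|k /negPf kj]; last by rewrite mxE kj mulr0.
by rewrite mxE eqxx addr0; case: ifP; rewrite ?mulrN1 ?mulr1.
Qed.

Lemma minkE x y : mink x y = sdot x y - time x * time y.
Proof.
rewrite /mink mxE big_ord_recl mulmx_lorJ eqxx !mxE addrC mulNr.
by congr (_ - _); apply: eq_bigr => j _; rewrite mulmx_lorJ mxE.
Qed.

Lemma minkC x y : mink x y = mink y x.
Proof. by rewrite !minkE /sdot mulrC; congr (_ - _); apply: eq_bigr => j _; rewrite mulrC. Qed.

Lemma minkDl x y z : mink (x + y) z = mink x z + mink y z.
Proof. by rewrite /mink !mulmxDl mxE. Qed.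

Lemma minkZl a x y : mink (a *: x) y = a * mink x y.
Proof. by rewrite /mink -!scalemxAl mxE. Qed.

Lemma minkNl x y : mink (- x) y = - mink x y.
Proof. by rewrite -scaleN1r minkZl mulN1r. Qed.

Lemma minkBl x y z : mink (x - y) z = mink x z - mink y z.
Proof. by rewrite minkDl minkNl. Qed.

Lemma minkDr x y z : mink z (x + y) = mink z x + mink z y.
Proof. by rewrite minkC minkDl !(minkC z). Qed.

Lemma minkZr a x y : mink y (a *: x) = a * mink y x.
Proof. by rewrite minkC minkZl minkC. Qed.

Lemma minkNr x y : mink y (- x) = - mink y x.
Proof. by rewrite minkC minkNl minkC. Qed.

Lemma minkBr x y z : mink z (x - y) = mink z x - mink z y.
Proof. by rewrite minkDr minkNr. Qed.

Definition minkE_lin := (minkDl, minkBl, minkZl, minkNl, minkDr, minkBr, minkZr, minkNr).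

Lemma sdot_ge0 x : 0 <= sdot x x.
Proof. by apply: sumr_ge0 => j _; rewrite -expr2 sqr_ge0. Qed.

Lemma sdot_eq0 x : sdot x x = 0 -> time x = 0 -> x = 0.
Proof.
move=> /eqP; rewrite psumr_eq0 => [/allP x0 t0|j _]; last by rewrite -expr2 sqr_ge0.
apply/rowP => j; rewrite mxE; case: (unliftP ord0 j) => [i ->|->] //.
by apply/eqP; rewrite -sqrf_eq0 expr2; apply: (implyP (x0 i (mem_index_enum i))).
Qed.

Lemma mink_ge0_time0 x : time x = 0 -> 0 <= mink x x.
Proof. by rewrite minkE => ->; rewrite mulr0 subr0 sdot_ge0. Qed.

Lemma timelike_time_neq0 x : mink x x < 0 -> time x != 0.
Proof. by apply: contraTneq => /mink_ge0_time0; rewrite leNgt => /negPf ->. Qed.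

(* Reversed Cauchy-Schwarz: [time y *: x - time x *: y] has time coordinate 0,
   hence nonnegative norm. *)
Lemma mink_future_le0 x y : 0 < time x -> 0 < time y ->
  mink x x <= 0 -> mink y y <= 0 -> mink x y <= 0.
Proof.
move=> x0 y0 xx yy.
have := @mink_ge0_time0 (time y *: x - time x *: y).
rewrite !mxE mulrC subrr => /(_ erefl); rewrite !minkE_lin (minkC y x).
have : 0 < time x * time y by rewrite mulr_gt0.
nra.
Qed.

Lemma null_orth_collinear u p : ideal u -> ideal p -> mink u p = 0 ->
  exists2 k, 0 < k & u = k *: p.
Proof.
move=> [uu u0] [pp p0] up; exists (time u / time p); first by rewrite divr_gt0.
set w := time p *: u - time u *: p.
have w0 : time w = 0 by rewrite !mxE mulrC subrr.
have : w = 0.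
  have := minkE w w; rewrite w0 mulr0 subr0 => wE.
  apply: sdot_eq0 w0; rewrite -wE.
  by rewrite !minkE_lin (minkC p u) uu pp up; ring.
move/eqP; rewrite subr_eq0 => /eqP wE.
by rewrite -[LHS](scalerK (lt0r_neq0 p0)) wE scalerA mulrC.
Qed.

Lemma timelike_scale_H4 x : mink x x < 0 -> exists k, H4 (k *: x).
Proof.
move=> xx; set s := Num.sqrt (- mink x x).
have s0 : 0 < s by rewrite sqrtr_gt0 oppr_gt0.
have ss : s ^+ 2 = - mink x x by rewrite sqr_sqrtr // oppr_ge0 ltW.
have unit k : k ^+ 2 = s^-2 -> mink (k *: x) (k *: x) = -1.
  move=> kk; rewrite minkZl minkZr mulrA -expr2 kk.
  have -> : mink x x = - s ^+ 2 by rewrite ss opprK.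
  by field; rewrite gt_eqF.
have := timelike_time_neq0 xx; case: ltgtP => // x0 _.
- exists (- s^-1); split; first by apply: unit; rewrite sqrrN exprVn.
  by rewrite mxE mulNr -mulrN mulr_gt0 ?invr_gt0 ?oppr_gt0.
- exists s^-1; split; first by apply: unit; rewrite exprVn.
  by rewrite mxE mulr_gt0 ?invr_gt0.
Qed.

Lemma mul_refl x n : x *m refl n = x - (2 * mink x n) *: n.
Proof.
rewrite /refl mulmxBr mulmx1 -scalemxAr !mulmxA; congr (_ - _).
apply/rowP => j; rewrite !mxE big_ord1 -/(mink x n).
by rewrite mulrA.
Qed.

Section Reflection.
Variable n : vec R.
Hypothesis n_unit : mink n n = 1.

Lemma mink_refl x y : mink (x *m refl n) (y *m refl n) = mink x y.
Proof. by rewrite !mul_refl !minkE_lin n_unit ?(minkC n x) ?(minkC n y) ?(minkC y x); ring. Qed.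

(* [y] has norm -1, so it is future or past; if it were past, then
   [mink x y >= 0], whereas [mink x y = -1 - 2 <x,n>^2]. *)
Lemma H4_refl x : H4 x -> H4 (x *m refl n).
Proof.
move=> [xx x0]; set y := x *m refl n.
have yy : mink y y = -1 by rewrite mink_refl.
have xy : mink x y <= -1.
  rewrite /y mul_refl !minkE_lin xx; have := sqr_ge0 (mink x n); lra.
split => //; have := @timelike_time_neq0 y; rewrite yy ltrN10 => /(_ isT).
case: ltgtP => // y0 _.
have := @mink_future_le0 x (- y) x0.
rewrite !minkE_lin opprK xx yy mxE oppr_gt0 => /(_ y0 (lerN10 R) (lerN10 R)).
lra.
Qed.

Lemma isometry_refl : Defs.isometry (refl n).
Proof. by split; [exact: mink_refl | exact: H4_refl]. Qed.

End Reflection.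

Lemma isometry_mul (A B : 'M[R]_5) : Defs.isometry A -> Defs.isometry B -> Defs.isometry (A *m B).
Proof.
move=> [AA AH] [BB BH]; split=> [x y|x hx]; rewrite !mulmxA; first by rewrite BB AA.
by apply/BH/AH.
Qed.

Definition perp_proj n1 n2 x := x - mink x n1 *: n1 - mink x n2 *: n2.

Lemma mink_perp_proj n1 n2 x z :
  mink (perp_proj n1 n2 x) z = mink x z - mink x n1 * mink n1 z - mink x n2 * mink n2 z.
Proof. by rewrite !minkE_lin. Qed.

Section HalfTurn.
Variables n1 n2 : vec R.
Hypotheses (n1_unit : mink n1 n1 = 1) (n2_unit : mink n2 n2 = 1) (n1n2 : mink n1 n2 = 0).
Let H := refl n2 *m refl n1.

Lemma mul_half_turn x : x *m H = x - (2 * mink x n1) *: n1 - (2 * mink x n2) *: n2.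
Proof.
rewrite mulmxA !mul_refl !minkE_lin (minkC n2 n1) n1n2.
by apply/rowP => j; rewrite !mxE; ring.
Qed.

Lemma mink_half_turn_n1 x : mink (x *m H) n1 = - mink x n1.
Proof. by rewrite mul_half_turn !minkE_lin (minkC n2 n1) n1n2 n1_unit; ring. Qed.

Lemma mink_half_turn_n2 x : mink (x *m H) n2 = - mink x n2.
Proof. by rewrite mul_half_turn !minkE_lin n1n2 n2_unit; ring. Qed.

Lemma half_turnK x : x *m H *m H = x.
Proof.
rewrite [LHS]mul_half_turn mink_half_turn_n1 mink_half_turn_n2 mul_half_turn.
by apply/rowP => j; rewrite !mxE; ring.
Qed.

Lemma half_turn_fix x : mink x n1 = 0 -> mink x n2 = 0 -> x *m H = x.
Proof. by move=> x1 x2; rewrite mul_half_turn x1 x2 mulr0 !scale0r !subr0. Qed.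

Lemma perp_proj_n1 x : mink (perp_proj n1 n2 x) n1 = 0.
Proof. by rewrite mink_perp_proj n1_unit (minkC n2 n1) n1n2; ring. Qed.

Lemma perp_proj_n2 x : mink (perp_proj n1 n2 x) n2 = 0.
Proof. by rewrite mink_perp_proj n2_unit n1n2; ring. Qed.

Lemma mink_perp_proj_self x :
  mink (perp_proj n1 n2 x) (perp_proj n1 n2 x) = mink x x - mink x n1 ^+ 2 - mink x n2 ^+ 2.
Proof.
rewrite [LHS]mink_perp_proj (minkC n1) (minkC n2) perp_proj_n1 perp_proj_n2.
by rewrite minkC mink_perp_proj (minkC n1) (minkC n2); ring.
Qed.

End HalfTurn.

Lemma boundary_orth_normals (V : 'M[R]_5) n1 n2 p :
  (forall x, H4 x -> (on_plane V x <-> (mink x n1 = 0 /\ mink x n2 = 0))) ->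
  is_plane V -> on_plane_boundary V p -> mink p n1 = 0 /\ mink p n2 = 0.
Proof.
move=> planeE [_ [x [Hx xV]]] [[pp p0] pV].
have [x1 x2] : mink x n1 = 0 /\ mink x n2 = 0 by apply/planeE.
have xp : mink x p <= 0.
  by apply: mink_future_le0; rewrite ?Hx.1 ?pp ?lerN10 //; case: Hx.
have [k Hk] : exists k, H4 (k *: (x + p)).
  by apply: timelike_scale_H4; rewrite !minkE_lin pp Hx.1 (minkC p x); lra.
have k0 : k != 0 by apply: contraTneq Hk.2 => ->; rewrite scale0r mxE ltxx.
have [] : mink (k *: (x + p)) n1 = 0 /\ mink (k *: (x + p)) n2 = 0.
  by apply/planeE => //; split => //; rewrite scalemx_sub // addmx_sub.
by rewrite !minkE_lin x1 x2 !add0r => /eqP; rewrite mulf_eq0 (negPf k0) => /eqP ->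
  /eqP; rewrite mulf_eq0 (negPf k0) => /eqP ->.
Qed.

Lemma disjoint_planes_orth_nontimelike (P Q : 'M[R]_5) n1 n2 m1 m2 :
  (forall x, H4 x -> (on_plane P x <-> (mink x n1 = 0 /\ mink x n2 = 0))) ->
  (forall x, H4 x -> (on_plane Q x <-> (mink x m1 = 0 /\ mink x m2 = 0))) ->
  (forall x, ~ (on_plane P x /\ on_plane Q x)) ->
  forall z, mink z n1 = 0 -> mink z n2 = 0 -> mink z m1 = 0 -> mink z m2 = 0 ->
  0 <= mink z z.
Proof.
move=> PE QE disj z z1 z2 z3 z4; rewrite leNgt; apply/negP => /timelike_scale_H4 [k Hk].
by apply: (disj (k *: z)); split; [apply/PE | apply/QE]; rewrite // !minkZl ?z1 ?z2 ?z3 ?z4 mulr0.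
Qed.

Section TangentHalfTurns.
Variables n1 n2 m1 m2 p : vec R.
Hypotheses (n1_unit : mink n1 n1 = 1) (n2_unit : mink n2 n2 = 1) (n1n2 : mink n1 n2 = 0).
Hypotheses (m1_unit : mink m1 m1 = 1) (m2_unit : mink m2 m2 = 1) (m1m2 : mink m1 m2 = 0).
Hypothesis orth_nontimelike : forall z,
  mink z n1 = 0 -> mink z n2 = 0 -> mink z m1 = 0 -> mink z m2 = 0 -> 0 <= mink z z.
Hypotheses (ideal_p : ideal p)
  (pn1 : mink p n1 = 0) (pn2 : mink p n2 = 0) (pm1 : mink p m1 = 0) (pm2 : mink p m2 = 0).
Let A := refl m2 *m refl m1 *m (refl n2 *m refl n1).

Lemma isometry_half_turns : Defs.isometry A.
Proof. by apply: isometry_mul; apply: isometry_mul; apply: isometry_refl. Qed.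

Lemma half_turns_fix_p : p *m A = p.
Proof. by rewrite mulmxA !half_turn_fix. Qed.

(* A fixed [x] satisfies [x *m H_Q = x *m H_P], and pairing this with [m1],
   [m2] gives exactly the orthogonality of [perp_proj n1 n2 x] to them. *)
Lemma half_turns_fixed_perp_proj x : x *m A = x ->
  mink (perp_proj n1 n2 x) m1 = 0 /\ mink (perp_proj n1 n2 x) m2 = 0.
Proof.
move=> xA; have HQP : x *m (refl m2 *m refl m1) = x *m (refl n2 *m refl n1).
  by rewrite -[LHS](half_turnK n1_unit n2_unit n1n2) -[x *m _ *m _]mulmxA xA.
rewrite !mink_perp_proj.
have := congr1 (fun y => mink y m1) HQP; have := congr1 (fun y => mink y m2) HQP.
rewrite /= mink_half_turn_n1 // mink_half_turn_n2 // !mul_half_turn // !minkE_lin.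
by move=> E2 E1; split; lra.
Qed.

Lemma half_turns_fixed_mink x : x *m A = x -> mink x n1 ^+ 2 + mink x n2 ^+ 2 <= mink x x.
Proof.
move=> /half_turns_fixed_perp_proj [y1 y2].
have := orth_nontimelike (perp_proj_n1 n1_unit n1n2 x) (perp_proj_n2 n2_unit n1n2 x).
by rewrite mink_perp_proj_self // => /(_ y1 y2); lra.
Qed.

Lemma half_turns_no_fixed_point x : H4 x -> x *m A <> x.
Proof.
move=> [xx _] /half_turns_fixed_mink; rewrite xx.
by have := sqr_ge0 (mink x n1); have := sqr_ge0 (mink x n2); lra.
Qed.

(* A fixed ideal point [u] not proportional to [p] would be fixed outright,
   and then [perp_proj n1 n2 u + p] is timelike and orthogonal to all four normals. *)
Lemma half_turns_fixed_ideal u : ideal u -> fixes_ideal A u -> exists2 k, 0 < k & u = k *: p.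
Proof.
move=> u_ideal [k k0 uA].
have [up0|up0] := eqVneq (mink u p) 0; first exact: null_orth_collinear.
have k1 : k = 1.
  apply: (mulIf up0); rewrite mul1r -minkZl -uA -[in LHS]half_turns_fix_p.
  by rewrite isometry_half_turns.1.
move: uA; rewrite k1 scale1r => /half_turns_fixed_perp_proj [y1 y2].
have up : mink u p < 0.
  rewrite lt_neqAle up0 mink_future_le0 ?u_ideal.1 ?ideal_p.1 //;
    [exact: u_ideal.2 | exact: ideal_p.2].
have yp : mink (perp_proj n1 n2 u) p = mink u p.
  by rewrite mink_perp_proj (minkC n1) (minkC n2) pn1 pn2; ring.
have yn1 := perp_proj_n1 n1_unit n1n2 u; have yn2 := perp_proj_n2 n2_unit n1n2 u.
have := mink_perp_proj_self n1_unit n2_unit n1n2 u.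
move: (perp_proj n1 n2 u) yp yn1 yn2 y1 y2 => y yp yn1 yn2 y1 y2 yy.
have := @orth_nontimelike (y + p); rewrite !minkDl yn1 yn2 y1 y2 pn1 pn2 pm1 pm2 addr0.
rewrite !minkDr yy yp (minkC p y) yp ideal_p.1 u_ideal.1 => /(_ erefl erefl erefl erefl).
by have := sqr_ge0 (mink u n1); have := sqr_ge0 (mink u n2); lra.
Qed.

Lemma parabolic_half_turns : parabolic A.
Proof.
split; [exact: isometry_half_turns | exact: half_turns_no_fixed_point | |].
  by exists p; split=> //; exists 1; rewrite ?scale1r ?half_turns_fix_p.
move=> u v /half_turns_fixed_ideal uA /half_turns_fixed_ideal vA /uA [a a0 ->] /vA [b b0 ->].
by exists (b / a); rewrite ?divr_gt0 // scalerA divfK ?gt_eqF.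
Qed.

End TangentHalfTurns.

End Minkowski.

Theorem lemma6p4 (R : realType) (P Q hP hQ : 'M[R]_5) :
  is_plane P -> is_plane Q ->
  ~ (P == Q)%MS ->
  (forall x, ~ (on_plane P x /\ on_plane Q x)) ->
  (exists u, on_plane_boundary P u /\ on_plane_boundary Q u) ->
  (forall u v, on_plane_boundary P u -> on_plane_boundary Q u ->
               on_plane_boundary P v -> on_plane_boundary Q v -> same_ideal u v) ->
  half_turn P hP -> half_turn Q hQ ->
  parabolic (hQ *m hP).
Proof.
move=> P_plane Q_plane _ disjPQ [p [pP pQ]] _
  [n1 [n2 [n1_unit n2_unit n1n2 PE ->]]] [m1 [m2 [m1_unit m2_unit m1m2 QE ->]]].
have [pn1 pn2] := boundary_orth_normals PE P_plane pP.
have [pm1 pm2] := boundary_orth_normals QE Q_plane pQ.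
apply: (parabolic_half_turns n1_unit n2_unit n1n2 m1_unit m2_unit m1m2 _ pP.1 pn1 pn2 pm1 pm2).
exact: disjoint_planes_orth_nontimelike PE QE disjPQ.
Qed.
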